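(* Let $I\subset\mathbb{R}$ be an open interval and let $x_1,x_2,\varphi:I\to\mathbb{R}$ be smooth functions such that the curve $\gamma(u)=(x_1(u),x_2(u),\cos\varphi(u),\sin\varphi(u))$ in $\mathbb{E}^4$ is parametrized by arclength, i.e. $(x_1')^2+(x_2')^2+(\varphi')^2=1$, and such that $1-(\varphi'(u))^2\neq 0$ for all $u\in I$. Let $M$ be the surface with position vector $$X(u,v)=\big(x_1(u),\,x_2(u),\,\cos\varphi(u)\cos v-\sin\varphi(u)\sin v,\,\cos\varphi(u)\sin v+\sin\varphi(u)\cos v\big).$$ Then the mean curvature vector $\vec H$ of $M$ satisfies, at each point, $$\|\vec H\|^2=\frac{1}{4\left(1-(\varphi'(u))^2\right)^2}\left(\kappa_\gamma^2+1-2(\varphi'(u))^2-\frac{(\varphi''(u))^2}{1-(\varphi'(u))^2}\right),$$ where $\kappa_\gamma=\|\gamma''(u)\|$ is the curvature of the profile curve $\gamma$.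
   Context: With $E=\langle X_u,X_u\rangle$, $F=\langle X_u,X_v\rangle$, $G=\langle X_v,X_v\rangle$ and $W^2=EG-F^2$, the second fundamental form $h$ is the normal component of the second derivatives: $h(X_u,X_u)=(X_{uu})^\perp$, $h(X_u,X_v)=(X_{uv})^\perp$, $h(X_v,X_v)=(X_{vv})^\perp$ (orthogonal projection onto the normal plane of $M$). The mean curvature vector is $\vec H=\frac{1}{2W^2}\big(E\,h(X_v,X_v)-2F\,h(X_u,X_v)+G\,h(X_u,X_u)\big)$. *)

From Stdlib Require Import Reals.
From Coquelicot Require Import Coquelicot.
Open Scope R_scope.

(* Vectors of E^4 : components indexed by 0,1,2,3 (other indices unused). *)
Definition vec4 := nat -> R.

Definition dot4 (a b : vec4) : R :=
  a 0%nat * b 0%nat + a 1%nat * b 1%nat + a 2%nat * b 2%nat + a 3%nat * b 3%nat.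

Definition norm2_4 (a : vec4) : R := dot4 a a.

Definition in_I (a b : Rbar) (u : R) : Prop := Rbar_lt a u /\ Rbar_lt u b.

Definition smooth_on (a b : Rbar) (f : R -> R) : Prop :=
  forall (n : nat) (u : R), in_I a b u -> ex_derive_n f n u.

Definition surf := R -> R -> vec4.

Definition d_u (X : surf) : surf := fun u v i => Derive (fun t => X t v i) u.
Definition d_v (X : surf) : surf := fun u v i => Derive (fun t => X u t i) v.

Definition Xu (X : surf) : surf := d_u X.
Definition Xv (X : surf) : surf := d_v X.
Definition Xuu (X : surf) : surf := d_u (d_u X).
Definition Xuv (X : surf) : surf := d_v (d_u X).
Definition Xvv (X : surf) : surf := d_v (d_v X).

Definition EE (X : surf) u v := dot4 (Xu X u v) (Xu X u v).
Definition FF (X : surf) u v := dot4 (Xu X u v) (Xv X u v).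
Definition GG (X : surf) u v := dot4 (Xv X u v) (Xv X u v).
Definition W2 (X : surf) u v := EE X u v * GG X u v - FF X u v ^ 2.

(* Orthogonal projection of w onto the tangent plane span(X_u, X_v)
   (Gram-matrix formula, valid when W^2 <> 0), and onto the normal plane. *)
Definition tangent_part (X : surf) (u v : R) (w : vec4) : vec4 :=
  fun i =>
    ((GG X u v * dot4 w (Xu X u v) - FF X u v * dot4 w (Xv X u v)) * Xu X u v i
   + (EE X u v * dot4 w (Xv X u v) - FF X u v * dot4 w (Xu X u v)) * Xv X u v i)
    / W2 X u v.

Definition normal_part (X : surf) (u v : R) (w : vec4) : vec4 :=
  fun i => w i - tangent_part X u v w i.

Definition h_uu (X : surf) u v := normal_part X u v (Xuu X u v).
Definition h_uv (X : surf) u v := normal_part X u v (Xuv X u v).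
Definition h_vv (X : surf) u v := normal_part X u v (Xvv X u v).

Definition mean_curv (X : surf) (u v : R) : vec4 :=
  fun i => / (2 * W2 X u v) *
    (EE X u v * h_vv X u v i - 2 * FF X u v * h_uv X u v i
     + GG X u v * h_uu X u v i).

Definition gamma (x1 x2 phi : R -> R) (u : R) : vec4 :=
  fun i => match i with
           | 0%nat => x1 u
           | 1%nat => x2 u
           | 2%nat => cos (phi u)
           | 3%nat => sin (phi u)
           | _ => 0
           end.

Definition surfX (x1 x2 phi : R -> R) : surf :=
  fun u v i => match i with
           | 0%nat => x1 u
           | 1%nat => x2 u
           | 2%nat => cos (phi u) * cos v - sin (phi u) * sin v
           | 3%nat => cos (phi u) * sin v + sin (phi u) * cos v
           | _ => 0
           end.

Definition kappa (x1 x2 phi : R -> R) (u : R) : R :=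
  sqrt (norm2_4 (fun i => Derive_n (fun t => gamma x1 x2 phi t i) 2 u)).

(* Writing θ = φ(u) + v, the surface is X = (x1, x2, cos θ, sin θ), so E = 1, F = φ', G = 1
   and W^2 = 1 - φ'^2.  The normal projection is linear, hence 2 W^2 H is the normal part of
   w = X_vv - 2 φ' X_uv + X_uu, and |w^⊥|^2 = |w|^2 - (G a^2 - 2 F a b + E b^2) / W^2 with
   a = <w, X_u>, b = <w, X_v>.  Differentiating the arclength condition gives a = 0; moreover
   b = φ'' and |w|^2 = κ^2 + 1 - 2 φ'^2, which is the claimed formula. *)

From Stdlib Require Import Reals Lra Lia.
From Coquelicot Require Import Coquelicot.
Open Scope R_scope.

Lemma cos_sin_sq (t : R) : cos t ^ 2 + sin t ^ 2 = 1.
Proof. rewrite <- (sin2_cos2 t). unfold Rsqr. ring. Qed.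

Lemma eq_mod_cos2_sin2 (t k x y : R) :
  x - y = k * (cos t ^ 2 + sin t ^ 2 - 1) -> x = y.
Proof. rewrite cos_sin_sq. intro H. lra. Qed.

Lemma in_I_locally (a b : Rbar) (u : R) : in_I a b u -> locally u (in_I a b).
Proof.
  apply locally_open; [| easy].
  apply open_and; [apply open_Rbar_gt | apply open_Rbar_lt].
Qed.

Lemma Derive_plus_const (f : R -> R) (c t : R) :
  Derive (fun s => f s + c) t = Derive f t.
Proof. unfold Derive. apply f_equal, Lim_ext. intro h. apply f_equal2; [ring | easy]. Qed.

Lemma ex_derive_plus_const (f : R -> R) (c t : R) :
  ex_derive f t -> ex_derive (fun s => f s + c) t.
Proof. intro Hf. auto_derive. exact Hf. Qed.

Lemma Derive_cos_comp (f : R -> R) (t : R) :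
  ex_derive f t -> Derive (fun s => cos (f s)) t = - sin (f t) * Derive f t.
Proof.
  intro Hf. apply is_derive_unique. auto_derive; [easy |].
  change (fun x => f x) with f. ring.
Qed.

Lemma Derive_sin_comp (f : R -> R) (t : R) :
  ex_derive f t -> Derive (fun s => sin (f s)) t = cos (f t) * Derive f t.
Proof.
  intro Hf. apply is_derive_unique. auto_derive; [easy |].
  change (fun x => f x) with f. ring.
Qed.

Lemma Derive2_cos_comp (f : R -> R) (t : R) :
  locally t (ex_derive f) -> ex_derive (Derive f) t ->
  Derive (fun s => Derive (fun r => cos (f r)) s) t
  = - cos (f t) * Derive f t ^ 2 - sin (f t) * Derive (Derive f) t.
Proof.
  intros Hf Hf'. pose proof (locally_singleton _ _ Hf) as Hft.
  apply is_derive_unique.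
  apply (is_derive_ext_loc (fun s => - sin (f s) * Derive f s)).
  - exact (filter_imp _ _ (fun s Hs => eq_sym (Derive_cos_comp f s Hs)) Hf).
  - auto_derive; [easy |].
    change (fun x => f x) with f. change (fun x => Derive f x) with (Derive f). ring.
Qed.

Lemma Derive2_sin_comp (f : R -> R) (t : R) :
  locally t (ex_derive f) -> ex_derive (Derive f) t ->
  Derive (fun s => Derive (fun r => sin (f r)) s) t
  = - sin (f t) * Derive f t ^ 2 + cos (f t) * Derive (Derive f) t.
Proof.
  intros Hf Hf'. pose proof (locally_singleton _ _ Hf) as Hft.
  apply is_derive_unique.
  apply (is_derive_ext_loc (fun s => cos (f s) * Derive f s)).
  - exact (filter_imp _ _ (fun s Hs => eq_sym (Derive_sin_comp f s Hs)) Hf).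
  - auto_derive; [easy |].
    change (fun x => f x) with f. change (fun x => Derive f x) with (Derive f). ring.
Qed.

Lemma unit_speed_orthogonal (p q r : R -> R) (t : R) :
  locally t (fun s => p s ^ 2 + q s ^ 2 + r s ^ 2 = 1) ->
  ex_derive p t -> ex_derive q t -> ex_derive r t ->
  p t * Derive p t + q t * Derive q t + r t * Derive r t = 0.
Proof.
  intros Hunit Hp Hq Hr.
  assert (Hconst : is_derive (fun s => p s ^ 2 + q s ^ 2 + r s ^ 2) t 0).
  { apply (is_derive_ext_loc (fun _ => 1)).
    - exact (filter_imp _ _ (fun s Hs => eq_sym Hs) Hunit).
    - auto_derive; easy. }
  assert (Hsum : is_derive (fun s => p s ^ 2 + q s ^ 2 + r s ^ 2) t
                   (2 * (p t * Derive p t + q t * Derive q t + r t * Derive r t))).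
  { auto_derive; [easy |]. change (fun x => p x) with p. change (fun x => q x) with q.
    change (fun x => r x) with r. ring. }
  pose proof (eq_trans (eq_sym (is_derive_unique _ _ _ Hconst)) (is_derive_unique _ _ _ Hsum))
    as Hzero.
  lra.
Qed.

Definition vec4_of (a0 a1 a2 a3 : R) : vec4 :=
  fun i => match i with 0%nat => a0 | 1%nat => a1 | 2%nat => a2 | 3%nat => a3 | _ => 0 end.

Definition agree4 (x y : vec4) : Prop := forall i, (i < 4)%nat -> x i = y i.

Lemma dot4_agree4 (x x' y y' : vec4) :
  agree4 x x' -> agree4 y y' -> dot4 x y = dot4 x' y'.
Proof.
  intros Hx Hy. unfold dot4.
  rewrite !Hx, !Hy by lia. reflexivity.
Qed.

Lemma norm2_4_agree4 (x y : vec4) : agree4 x y -> norm2_4 x = norm2_4 y.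
Proof. intro H. exact (dot4_agree4 _ _ _ _ H H). Qed.

Lemma dot4_vec4_of (a0 a1 a2 a3 b0 b1 b2 b3 : R) :
  dot4 (vec4_of a0 a1 a2 a3) (vec4_of b0 b1 b2 b3) = a0 * b0 + a1 * b1 + a2 * b2 + a3 * b3.
Proof. reflexivity. Qed.

Lemma norm2_4_vec4_of (a0 a1 a2 a3 : R) :
  norm2_4 (vec4_of a0 a1 a2 a3) = a0 ^ 2 + a1 ^ 2 + a2 ^ 2 + a3 ^ 2.
Proof. unfold norm2_4, dot4. simpl. ring. Qed.

Lemma norm2_4_nonneg (x : vec4) : 0 <= norm2_4 x.
Proof. unfold norm2_4, dot4. nra. Qed.

Lemma norm2_4_sub_comb (w A B : vec4) (p q : R) :
  norm2_4 (fun i => w i - (p * A i + q * B i))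
  = norm2_4 w - 2 * p * dot4 w A - 2 * q * dot4 w B
    + p ^ 2 * dot4 A A + 2 * p * q * dot4 A B + q ^ 2 * dot4 B B.
Proof. unfold norm2_4, dot4. ring. Qed.

Lemma norm2_4_scal (c : R) (x : vec4) : norm2_4 (fun i => c * x i) = c ^ 2 * norm2_4 x.
Proof. unfold norm2_4, dot4. ring. Qed.

Lemma norm2_normal_part (X : surf) (u v : R) (w : vec4) : W2 X u v <> 0 ->
  norm2_4 (normal_part X u v w)
  = norm2_4 w
    - (GG X u v * dot4 w (Xu X u v) ^ 2
       - 2 * FF X u v * dot4 w (Xu X u v) * dot4 w (Xv X u v)
       + EE X u v * dot4 w (Xv X u v) ^ 2) / W2 X u v.
Proof.
  intro HW.
  set (a := dot4 w (Xu X u v)). set (b := dot4 w (Xv X u v)).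
  rewrite (norm2_4_agree4 _
    (fun i => w i - ((GG X u v * a - FF X u v * b) / W2 X u v * Xu X u v i
                     + (EE X u v * b - FF X u v * a) / W2 X u v * Xv X u v i))).
  2: { intros i _. unfold normal_part, tangent_part. fold a b. field. exact HW. }
  rewrite norm2_4_sub_comb. fold a b.
  change (dot4 (Xu X u v) (Xu X u v)) with (EE X u v).
  change (dot4 (Xu X u v) (Xv X u v)) with (FF X u v).
  change (dot4 (Xv X u v) (Xv X u v)) with (GG X u v).
  unfold W2 in *. field. exact HW.
Qed.

Definition mean_curv_num (X : surf) (u v : R) : vec4 :=
  fun i => EE X u v * Xvv X u v i - 2 * FF X u v * Xuv X u v i + GG X u v * Xuu X u v i.

Lemma norm2_mean_curv (X : surf) (u v : R) :
  norm2_4 (mean_curv X u v)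
  = (/ (2 * W2 X u v)) ^ 2 * norm2_4 (normal_part X u v (mean_curv_num X u v)).
Proof.
  rewrite <- norm2_4_scal.
  apply norm2_4_agree4. intros i _.
  unfold mean_curv, h_uu, h_uv, h_vv, normal_part, tangent_part, mean_curv_num, dot4.
  cbv beta. unfold Rdiv. ring.
Qed.

Section RotationalSurface.

Variables x1 x2 phi : R -> R.

Local Notation X := (surfX x1 x2 phi).

Lemma surfX_2 (u v : R) : X u v 2%nat = cos (phi u + v).
Proof. simpl. rewrite cos_plus. ring. Qed.

Lemma surfX_3 (u v : R) : X u v 3%nat = sin (phi u + v).
Proof. simpl. rewrite sin_plus. ring. Qed.

Lemma Xv_surfX (u v : R) :
  agree4 (Xv X u v) (vec4_of 0 0 (- sin (phi u + v)) (cos (phi u + v))).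
Proof.
  unfold Xv, d_v. intros [|[|[|[|i]]]] Hi; cbn [vec4_of]; try lia.
  - exact (Derive_const (x1 u) v).
  - exact (Derive_const (x2 u) v).
  - rewrite (Derive_ext _ (fun t => cos (phi u + t))) by apply surfX_2.
    apply is_derive_unique. auto_derive; [easy | ring].
  - rewrite (Derive_ext _ (fun t => sin (phi u + t))) by apply surfX_3.
    apply is_derive_unique. auto_derive; [easy | ring].
Qed.

Lemma Xvv_surfX (u v : R) :
  agree4 (Xvv X u v) (vec4_of 0 0 (- cos (phi u + v)) (- sin (phi u + v))).
Proof.
  unfold Xvv, d_v at 1. intros i Hi.
  rewrite (Derive_ext _ (fun t => vec4_of 0 0 (- sin (phi u + t)) (cos (phi u + t)) i))
    by (intro t; exact (Xv_surfX u t i Hi)).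
  destruct i as [|[|[|[|i]]]]; cbn [vec4_of]; try lia;
    apply is_derive_unique; auto_derive; try easy; ring.
Qed.

Lemma Xu_surfX (u v : R) : ex_derive phi u ->
  agree4 (Xu X u v)
    (vec4_of (Derive x1 u) (Derive x2 u)
       (- sin (phi u + v) * Derive phi u) (cos (phi u + v) * Derive phi u)).
Proof.
  intro Hphi. pose proof (ex_derive_plus_const _ v _ Hphi) as Hshift.
  unfold Xu, d_u. intros [|[|[|[|i]]]] Hi; cbn [vec4_of]; try lia; try reflexivity.
  - rewrite (Derive_ext _ (fun t => cos (phi t + v))) by (intro; apply surfX_2).
    rewrite (Derive_cos_comp (fun t => phi t + v)), Derive_plus_const; easy.
  - rewrite (Derive_ext _ (fun t => sin (phi t + v))) by (intro; apply surfX_3).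
    rewrite (Derive_sin_comp (fun t => phi t + v)), Derive_plus_const; easy.
Qed.

Lemma Xuv_surfX (u v : R) : ex_derive phi u ->
  agree4 (Xuv X u v)
    (vec4_of 0 0 (- cos (phi u + v) * Derive phi u) (- sin (phi u + v) * Derive phi u)).
Proof.
  intros Hphi i Hi. unfold Xuv, d_v at 1.
  rewrite (Derive_ext _ (fun t => vec4_of (Derive x1 u) (Derive x2 u)
             (- sin (phi u + t) * Derive phi u) (cos (phi u + t) * Derive phi u) i))
    by (intro t; exact (Xu_surfX u t Hphi i Hi)).
  destruct i as [|[|[|[|i]]]]; cbn [vec4_of]; try lia;
    apply is_derive_unique; auto_derive; try easy; ring.
Qed.

Lemma Xuu_surfX (u v : R) : locally u (ex_derive phi) -> ex_derive (Derive phi) u ->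
  agree4 (Xuu X u v)
    (vec4_of (Derive (Derive x1) u) (Derive (Derive x2) u)
       (- cos (phi u + v) * Derive phi u ^ 2 - sin (phi u + v) * Derive (Derive phi) u)
       (- sin (phi u + v) * Derive phi u ^ 2 + cos (phi u + v) * Derive (Derive phi) u)).
Proof.
  intros Hphi Hphi2.
  set (f := fun t => phi t + v).
  assert (Df : forall t, Derive f t = Derive phi t) by (intro; apply Derive_plus_const).
  assert (Hf : locally u (ex_derive f))
    by exact (filter_imp _ _ (fun t Ht => ex_derive_plus_const _ v _ Ht) Hphi).
  assert (Hf2 : ex_derive (Derive f) u)
    by (apply (ex_derive_ext (Derive phi)); [intro; symmetry; apply Df | exact Hphi2]).
  assert (DDf : Derive (Derive f) u = Derive (Derive phi) u) by (apply Derive_ext, Df).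
  unfold Xuu, d_u at 1. intros [|[|[|[|i]]]] Hi; cbn [vec4_of]; try lia; try reflexivity.
  - rewrite (Derive_ext _ (fun t => Derive (fun s => cos (f s)) t))
      by (intro; apply Derive_ext; intro; apply surfX_2).
    rewrite Derive2_cos_comp, Df, DDf; easy.
  - rewrite (Derive_ext _ (fun t => Derive (fun s => sin (f s)) t))
      by (intro; apply Derive_ext; intro; apply surfX_3).
    rewrite Derive2_sin_comp, Df, DDf; easy.
Qed.

Lemma GG_surfX (u v : R) : GG X u v = 1.
Proof.
  unfold GG. rewrite (dot4_agree4 _ _ _ _ (Xv_surfX u v) (Xv_surfX u v)), dot4_vec4_of.
  apply (eq_mod_cos2_sin2 (phi u + v) 1). ring.
Qed.

Lemma FF_surfX (u v : R) : ex_derive phi u -> FF X u v = Derive phi u.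
Proof.
  intro Hphi. unfold FF.
  rewrite (dot4_agree4 _ _ _ _ (Xu_surfX u v Hphi) (Xv_surfX u v)), dot4_vec4_of.
  apply (eq_mod_cos2_sin2 (phi u + v) (Derive phi u)). ring.
Qed.

Lemma EE_surfX (u v : R) : ex_derive phi u ->
  EE X u v = Derive x1 u ^ 2 + Derive x2 u ^ 2 + Derive phi u ^ 2.
Proof.
  intro Hphi. unfold EE.
  rewrite (dot4_agree4 _ _ _ _ (Xu_surfX u v Hphi) (Xu_surfX u v Hphi)), dot4_vec4_of.
  apply (eq_mod_cos2_sin2 (phi u + v) (Derive phi u ^ 2)). ring.
Qed.

Lemma kappa_sq (u : R) : locally u (ex_derive phi) -> ex_derive (Derive phi) u ->
  kappa x1 x2 phi u ^ 2
  = Derive (Derive x1) u ^ 2 + Derive (Derive x2) u ^ 2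
    + Derive phi u ^ 4 + Derive (Derive phi) u ^ 2.
Proof.
  intros Hphi Hphi2. unfold kappa. rewrite pow2_sqrt by apply norm2_4_nonneg.
  rewrite (norm2_4_agree4 _ (vec4_of (Derive (Derive x1) u) (Derive (Derive x2) u)
     (- cos (phi u) * Derive phi u ^ 2 - sin (phi u) * Derive (Derive phi) u)
     (- sin (phi u) * Derive phi u ^ 2 + cos (phi u) * Derive (Derive phi) u))).
  - rewrite norm2_4_vec4_of.
    apply (eq_mod_cos2_sin2 (phi u) (Derive phi u ^ 4 + Derive (Derive phi) u ^ 2)). ring.
  - intros [|[|[|[|i]]]] Hi; cbn [vec4_of]; try lia; try reflexivity.
    + exact (Derive2_cos_comp phi u Hphi Hphi2).
    + exact (Derive2_sin_comp phi u Hphi Hphi2).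
Qed.

Section UnitSpeedPoint.

Variable u : R.
Hypothesis Hphi : locally u (ex_derive phi).
Hypothesis Hphi2 : ex_derive (Derive phi) u.
Hypothesis Hunit : locally u (fun t => Derive x1 t ^ 2 + Derive x2 t ^ 2 + Derive phi t ^ 2 = 1).

Let Hphi1 : ex_derive phi u := locally_singleton _ _ Hphi.

Lemma W2_surfX (v : R) : W2 X u v = 1 - Derive phi u ^ 2.
Proof.
  unfold W2. rewrite EE_surfX, FF_surfX, GG_surfX, (locally_singleton _ _ Hunit); easy || ring.
Qed.

Lemma mean_curv_num_surfX (v : R) :
  agree4 (mean_curv_num X u v)
    (vec4_of (Derive (Derive x1) u) (Derive (Derive x2) u)
       ((Derive phi u ^ 2 - 1) * cos (phi u + v) - Derive (Derive phi) u * sin (phi u + v))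
       ((Derive phi u ^ 2 - 1) * sin (phi u + v) + Derive (Derive phi) u * cos (phi u + v))).
Proof.
  intros i Hi. unfold mean_curv_num.
  rewrite EE_surfX, FF_surfX, GG_surfX, (locally_singleton _ _ Hunit) by easy.
  rewrite (Xvv_surfX u v i Hi), (Xuv_surfX u v Hphi1 i Hi), (Xuu_surfX u v Hphi Hphi2 i Hi).
  destruct i as [|[|[|[|i]]]]; cbn [vec4_of]; try lia; ring.
Qed.

Lemma dot4_mean_curv_num_Xv (v : R) :
  dot4 (mean_curv_num X u v) (Xv X u v) = Derive (Derive phi) u.
Proof.
  rewrite (dot4_agree4 _ _ _ _ (mean_curv_num_surfX v) (Xv_surfX u v)), dot4_vec4_of.
  apply (eq_mod_cos2_sin2 (phi u + v) (Derive (Derive phi) u)). ring.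
Qed.

Lemma dot4_mean_curv_num_Xu (v : R) :
  ex_derive (Derive x1) u -> ex_derive (Derive x2) u ->
  dot4 (mean_curv_num X u v) (Xu X u v) = 0.
Proof.
  intros Hx1 Hx2.
  rewrite (dot4_agree4 _ _ _ _ (mean_curv_num_surfX v) (Xu_surfX u v Hphi1)), dot4_vec4_of.
  rewrite <- (unit_speed_orthogonal _ _ _ u Hunit Hx1 Hx2 Hphi2).
  apply (eq_mod_cos2_sin2 (phi u + v) (Derive phi u * Derive (Derive phi) u)). ring.
Qed.

Lemma norm2_mean_curv_num (v : R) :
  norm2_4 (mean_curv_num X u v) = kappa x1 x2 phi u ^ 2 + 1 - 2 * Derive phi u ^ 2.
Proof.
  rewrite (norm2_4_agree4 _ _ (mean_curv_num_surfX v)), norm2_4_vec4_of, kappa_sq by easy.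
  apply (eq_mod_cos2_sin2 (phi u + v) ((Derive phi u ^ 2 - 1) ^ 2 + Derive (Derive phi) u ^ 2)).
  ring.
Qed.

End UnitSpeedPoint.

End RotationalSurface.

Theorem proposition2 (a b : Rbar) (x1 x2 phi : R -> R)
  (Hab : Rbar_lt a b)
  (Hx1 : smooth_on a b x1) (Hx2 : smooth_on a b x2) (Hphi : smooth_on a b phi)
  (Harc : forall u, in_I a b u ->
     (Derive x1 u) ^ 2 + (Derive x2 u) ^ 2 + (Derive phi u) ^ 2 = 1)
  (Hreg : forall u, in_I a b u -> 1 - (Derive phi u) ^ 2 <> 0) :
  forall u v : R, in_I a b u ->
    norm2_4 (mean_curv (surfX x1 x2 phi) u v) =
    / (4 * (1 - (Derive phi u) ^ 2) ^ 2) *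
    (kappa x1 x2 phi u ^ 2 + 1 - 2 * (Derive phi u) ^ 2
     - (Derive_n phi 2 u) ^ 2 / (1 - (Derive phi u) ^ 2)).
Proof.
  intros u v Hu.
  pose proof (in_I_locally a b u Hu) as HI.
  pose proof (filter_imp _ _ (Hphi 1%nat) HI) as Hphi_near.
  pose proof (filter_imp _ _ Harc HI) as Hunit.
  pose proof (Hphi 2%nat u Hu : ex_derive (Derive phi) u) as Hphi2.
  pose proof (W2_surfX x1 x2 phi u Hphi_near Hunit v) as HW.
  pose proof (Hreg u Hu) as Hreg_u.
  rewrite norm2_mean_curv, norm2_normal_part by (rewrite HW; exact Hreg_u).
  rewrite (norm2_mean_curv_num x1 x2 phi u Hphi_near Hphi2 Hunit),
    (dot4_mean_curv_num_Xv x1 x2 phi u Hphi_near Hphi2 Hunit),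
    (dot4_mean_curv_num_Xu x1 x2 phi u Hphi_near Hphi2 Hunit v (Hx1 2%nat u Hu) (Hx2 2%nat u Hu)),
    HW, GG_surfX, (FF_surfX x1 x2 phi u v (Hphi 1%nat u Hu)),
    (EE_surfX x1 x2 phi u v (Hphi 1%nat u Hu)), (Harc u Hu).
  change (Derive_n phi 2 u) with (Derive (Derive phi) u).
  field. exact Hreg_u.
Qed.
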